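(* Let $\mathfrak g$ be a $3$-dimensional complex vector space. Every non-degenerate product $\mu$ on $\mathfrak g$ is equivalent (under the $\operatorname{GL}(\mathfrak g)$-action) to exactly one of the products whose matrices, in a suitable basis, are $$\mu_{1;a}=\begin{pmatrix}1&0&0\\0&1&-a\\0&a&1\end{pmatrix}\ (a\in\mathbb C\setminus\{0\}),\qquad \mu_2=\mathbb 1_3,\qquad \mu_3=\begin{pmatrix}0&1&0\\1&0&-1\\0&1&1\end{pmatrix}.$$ Moreover, $\mu_{1;a}$ is equivalent to $\mu_{1;a'}$ if and only if $a=\pm a'$.
   Context: A product on a complex vector space $\mathfrak g$ is a skew-symmetric bilinear map $\mu:\mathfrak g\times\mathfrak g\to\mathfrak g$. Given a basis $\{e_1,e_2,e_3\}$, the matrix $M_\mu=(\mu_{ij})$ of $\mu$ is defined by $\mu(e_2,e_3)=\sum_i\mu_{i1}e_i$, $\mu(e_3,e_1)=\sum_i\mu_{i2}e_i$, $\mu(e_1,e_2)=\sum_i\mu_{i3}e_i$; this gives a bijection between products and $3\times 3$ complex matrices. $\operatorname{GL}(\mathfrak g)$ acts on products by $(g\cdot\mu)(x,y)=g(\mu(g^{-1}x,g^{-1}y))$, and in matrix terms $M_{g\cdot\mu}=(\det g)^{-1}gM_\mu g^t$; two products are equivalent if they lie in the same orbit. The product $\mu$ is called non-degenerate if the symmetric part $\tfrac12(M_\mu+M_\mu^t)$ of its matrix is an invertible matrix, and degenerate otherwise. *)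

(* The complex field is modelled by an arbitrary
   C : numClosedFieldType (algebraically closed, characteristic 0). *)
From HB Require Import structures.
From mathcomp Require Import all_boot all_order all_algebra.
Set Implicit Arguments. Unset Strict Implicit. Unset Printing Implicit Defensive.
Import Order.TTheory GRing.Theory Num.Theory.
Local Open Scope ring_scope.

(* A product on C^3 is identified with its matrix M_mu (a 3x3 matrix). *)

Definition mx3 (C : numClosedFieldType) (r : seq (seq C)) : 'M[C]_3 :=
  \matrix_(i < 3, j < 3) nth 0 (nth [::] r i) j.

Definition prod_act (C : numClosedFieldType) (g M : 'M[C]_3) : 'M[C]_3 :=
  (\det g)^-1 *: (g *m M *m g^T).

Definition prod_equiv (C : numClosedFieldType) (M N : 'M[C]_3) : Prop :=
  exists g : 'M[C]_3, g \in unitmx /\ N = prod_act g M.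

Definition prod_nondeg (C : numClosedFieldType) (M : 'M[C]_3) : bool :=
  (2%:R^-1 *: (M + M^T)) \in unitmx.

Definition mu1 (C : numClosedFieldType) (a : C) : 'M[C]_3 :=
  mx3 [:: [:: 1; 0; 0]; [:: 0; 1; - a]; [:: 0; a; 1]].

Definition mu2 (C : numClosedFieldType) : 'M[C]_3 := 1%:M.

Definition mu3 (C : numClosedFieldType) : 'M[C]_3 :=
  mx3 [:: [:: 0; 1; 0]; [:: 1; 0; -1]; [:: 0; 1; 1]].

From HB Require Import structures.
From mathcomp Require Import all_boot all_order all_algebra ring.
Import GRing.Theory Num.Theory.
Set Implicit Arguments. Unset Strict Implicit. Unset Printing Implicit Defensive.
Local Open Scope ring_scope.

(* Write S = M + M^T for (twice) its symmetric
   part and w for the skew vector of M, so that M - M^T acts as a cross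
   product with w and u^T M v - v^T M u = det(w, v, u).

   Uniqueness: sym_det M = det S and skew_norm M = w^T M w both get
   multiplied by (det g)^-1 under the action, so skew_norm N * sym_det M =
   skew_norm M * sym_det N for equivalent M, N.  The values (4a^2, 8),
   (0, 8), (0, -8) on mu_{1;a}, mu_2, mu_3 separate the normal forms, except
   mu_2 from mu_3, which differ in symmetry.

   Existence is proved for the relation g M g^T = l N (l != 0), which
   implies equivalence.  Take as first basis vector either w, when
   w^T M w != 0 or w is isotropic and non-zero, or a non-isotropic vector
   when M is symmetric; the first row and column then agree.  A non-zero
   (0,0) entry is cleared by elimination, leaving a 2x2 block normalised by
   square roots to mu_{1;a} (a = 0 gives mu_2); an isotropic w leads to mu_3
   by an explicit change of basis. *)

Definition i0 : 'I_3 := @Ordinal 3 0 isT.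
Definition i1 : 'I_3 := @Ordinal 3 1 isT.
Definition i2 : 'I_3 := @Ordinal 3 2 isT.

Ltac ord3 i := case: i => [[|[|[|?]]] ?] //=.

(* Prove [X != 0] from [h : Y != 0] when [Y = X] is a ring identity. *)
Ltac neq0_by_ring h :=
  apply: (contra_neq _ h); let Hz := fresh in move=> Hz; apply: (etrans _ Hz); ring.

Section Coordinates.
Variable C : numClosedFieldType.
Implicit Type M : 'M[C]_3.

Lemma mx3_eta M :
  M = mx3 [:: [:: M i0 i0; M i0 i1; M i0 i2]; [:: M i1 i0; M i1 i1; M i1 i2];
              [:: M i2 i0; M i2 i1; M i2 i2]].
Proof.
apply/matrixP => i j; rewrite mxE.
by ord3 i; ord3 j; congr (M _ _); apply: val_inj.
Qed.

Lemma mx3_congr (a b c d e f g h k a' b' c' d' e' f' g' h' k' : C) :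
  a = a' -> b = b' -> c = c' -> d = d' -> e = e' -> f = f' -> g = g' -> h = h' -> k = k' ->
  mx3 [:: [:: a; b; c]; [:: d; e; f]; [:: g; h; k]] =
  mx3 [:: [:: a'; b'; c']; [:: d'; e'; f']; [:: g'; h'; k']].
Proof. by move=> -> -> -> -> -> -> -> -> ->. Qed.

Lemma mul_mx3 (a b c d e f g h k a' b' c' d' e' f' g' h' k' : C) :
  mx3 [:: [:: a; b; c]; [:: d; e; f]; [:: g; h; k]] *m
  mx3 [:: [:: a'; b'; c']; [:: d'; e'; f']; [:: g'; h'; k']] =
  mx3 [:: [:: a*a' + b*d' + c*g'; a*b' + b*e' + c*h'; a*c' + b*f' + c*k'];
          [:: d*a' + e*d' + f*g'; d*b' + e*e' + f*h'; d*c' + e*f' + f*k'];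
          [:: g*a' + h*d' + k*g'; g*b' + h*e' + k*h'; g*c' + h*f' + k*k']].
Proof.
apply/matrixP => i j; rewrite !mxE !big_ord_recl big_ord0 !mxE /=.
ord3 i; ord3 j; rewrite /bump /=; ring.
Qed.

Lemma tr_mx3 (a b c d e f g h k : C) :
  (mx3 [:: [:: a; b; c]; [:: d; e; f]; [:: g; h; k]])^T =
  mx3 [:: [:: a; d; g]; [:: b; e; h]; [:: c; f; k]].
Proof. by apply/matrixP => i j; rewrite !mxE; ord3 i; ord3 j. Qed.

Lemma add_mx3 (a b c d e f g h k a' b' c' d' e' f' g' h' k' : C) :
  mx3 [:: [:: a; b; c]; [:: d; e; f]; [:: g; h; k]] +
  mx3 [:: [:: a'; b'; c']; [:: d'; e'; f']; [:: g'; h'; k']] =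
  mx3 [:: [:: a+a'; b+b'; c+c']; [:: d+d'; e+e'; f+f']; [:: g+g'; h+h'; k+k']].
Proof. by apply/matrixP => i j; rewrite !mxE; ord3 i; ord3 j. Qed.

Lemma scale_mx3 (x a b c d e f g h k : C) :
  x *: mx3 [:: [:: a; b; c]; [:: d; e; f]; [:: g; h; k]] =
  mx3 [:: [:: x*a; x*b; x*c]; [:: x*d; x*e; x*f]; [:: x*g; x*h; x*k]].
Proof. by apply/matrixP => i j; rewrite !mxE; ord3 i; ord3 j. Qed.

Lemma id_mx3 : (1%:M : 'M[C]_3) = mx3 [:: [:: 1; 0; 0]; [:: 0; 1; 0]; [:: 0; 0; 1]].
Proof. by apply/matrixP => i j; rewrite !mxE; ord3 i; ord3 j. Qed.

Lemma det_mx3 (a b c d e f g h k : C) :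
  \det (mx3 [:: [:: a; b; c]; [:: d; e; f]; [:: g; h; k]]) =
  a*e*k - a*f*h - b*d*k + b*f*g + c*d*h - c*e*g.
Proof.
rewrite (expand_det_row _ ord0) !big_ord_recl big_ord0 /cofactor.
rewrite !(expand_det_row _ ord0) !big_ord_recl !big_ord0 /cofactor.
rewrite !det_mx11 !mxE /= /bump /=; ring.
Qed.

Lemma unit_mx3 (a b c d e f g h k : C) :
  a*e*k - a*f*h - b*d*k + b*f*g + c*d*h - c*e*g != 0 ->
  mx3 [:: [:: a; b; c]; [:: d; e; f]; [:: g; h; k]] \in unitmx.
Proof. by rewrite unitmxE det_mx3 unitfE. Qed.

End Coordinates.

Section Forms.
Variable C : numClosedFieldType.
Implicit Types G M : 'M[C]_3.
Implicit Types u v w : C * C * C.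

Definition bil M u v : C :=
  let: (u0, u1, u2) := u in let: (v0, v1, v2) := v in
  u0 * (M i0 i0 * v0 + M i0 i1 * v1 + M i0 i2 * v2) +
  u1 * (M i1 i0 * v0 + M i1 i1 * v1 + M i1 i2 * v2) +
  u2 * (M i2 i0 * v0 + M i2 i1 * v1 + M i2 i2 * v2).

Definition qf M u : C := bil M u u.

Definition row3 G (i : 'I_3) : C * C * C := (G i i0, G i i1, G i i2).

Definition det3 u v w : C :=
  \det (mx3 [:: [:: u.1.1; u.1.2; u.2]; [:: v.1.1; v.1.2; v.2]; [:: w.1.1; w.1.2; w.2]]).

(* The skew part M - M^T of a product acts as the cross product with this
   vector; it vanishes exactly when M is symmetric. *)
Definition skew_vec M : C * C * C :=
  (M i2 i1 - M i1 i2, M i0 i2 - M i2 i0, M i1 i0 - M i0 i1).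

Lemma congr_entry G M i j : (G *m M *m G^T) i j = bil M (row3 G i) (row3 G j).
Proof.
rewrite /bil /row3 !mxE !big_ord_recl !big_ord0 !mxE !big_ord_recl !big_ord0 /=.
rewrite /bump /=.
have -> : lift ord0 ord0 = i1 :> 'I_3 by apply: val_inj.
have -> : lift ord0 (lift ord0 ord0) = i2 :> 'I_3 by apply: val_inj.
have -> : ord0 = i0 :> 'I_3 by apply: val_inj.
ring.
Qed.

Lemma det_rows G : det3 (row3 G i0) (row3 G i1) (row3 G i2) = \det G.
Proof. by rewrite {4}(mx3_eta G). Qed.

Lemma bil_skew M u v : bil M u v - bil M v u = det3 (skew_vec M) v u.
Proof.
case: u => [[u0 u1] u2]; case: v => [[v0 v1] v2].
rewrite /bil /det3 /skew_vec det_mx3 /=; ring.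
Qed.

Lemma skew_vec_bil_sym M v : bil M (skew_vec M) v = bil M v (skew_vec M).
Proof.
apply/eqP; rewrite -subr_eq0 bil_skew /det3 det_mx3; apply/eqP; ring.
Qed.

Lemma skew_free_bil_sym M u v : skew_vec M = (0, 0, 0) -> bil M u v = bil M v u.
Proof.
move=> w0; apply/eqP; rewrite -subr_eq0 bil_skew w0 /det3 det_mx3 /=; apply/eqP; ring.
Qed.

End Forms.

Section Invariants.
Variable C : numClosedFieldType.
Implicit Types G M N : 'M[C]_3.

(* Determinant of (twice) the symmetric part: non-zero iff M is non-degenerate. *)
Definition sym_det M : C := \det (M + M^T).

Definition skew_norm M : C := qf M (skew_vec M).

Lemma sym_det_congr G M : sym_det (G *m M *m G^T) = (\det G) ^+ 2 * sym_det M.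
Proof.
rewrite /sym_det !trmx_mul trmxK mulmxA -mulmxDl -mulmxDr !det_mulmx det_tr.
by rewrite mulrC mulrA -expr2.
Qed.

Lemma sym_det_scale (x : C) M : sym_det (x *: M) = x ^+ 3 * sym_det M.
Proof. by rewrite /sym_det linearZ /= -scalerDr detZ. Qed.

(* The skew vector transforms as det(G) G^-T w, so skew_norm has the same
   weight as sym_det; this is a polynomial identity in the 18 entries. *)
Lemma skew_norm_congr G M : skew_norm (G *m M *m G^T) = (\det G) ^+ 2 * skew_norm M.
Proof.
rewrite (mx3_eta G) (mx3_eta M) tr_mx3 !mul_mx3 det_mx3.
rewrite /skew_norm /qf /bil /skew_vec !mxE /=; ring.
Qed.

Lemma skew_norm_scale (x : C) M : skew_norm (x *: M) = x ^+ 3 * skew_norm M.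
Proof. rewrite /skew_norm /qf /bil /skew_vec !mxE /=; ring. Qed.

(* Both invariants have the same weight under the GL-action, so their
   "ratio" is an absolute invariant of equivalence classes. *)
Lemma equiv_invariant M N :
  prod_equiv M N -> skew_norm N * sym_det M = skew_norm M * sym_det N.
Proof.
move=> [g [_ ->]]; rewrite /prod_act skew_norm_scale sym_det_scale.
rewrite skew_norm_congr sym_det_congr; ring.
Qed.

Lemma skew_norm_mu1 (a : C) : skew_norm (mu1 a) = 4 * a ^+ 2.
Proof. rewrite /skew_norm /qf /bil /skew_vec /mu1 !mxE /=; ring. Qed.

Lemma skew_norm_mu2 : skew_norm (mu2 C) = 0.
Proof. rewrite /skew_norm /qf /bil /skew_vec /mu2 !mxE /=; ring. Qed.

Lemma skew_norm_mu3 : skew_norm (mu3 C) = 0.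
Proof. rewrite /skew_norm /qf /bil /skew_vec /mu3 !mxE /=; ring. Qed.

Lemma sym_det_mu1 (a : C) : sym_det (mu1 a) = 8.
Proof. rewrite /sym_det /mu1 tr_mx3 add_mx3 det_mx3; ring. Qed.

Lemma sym_det_mu2 : sym_det (mu2 C) = 8.
Proof. rewrite /sym_det /mu2 id_mx3 tr_mx3 add_mx3 det_mx3; ring. Qed.

Lemma sym_det_mu3 : sym_det (mu3 C) = -8.
Proof. rewrite /sym_det /mu3 tr_mx3 add_mx3 det_mx3; ring. Qed.

End Invariants.

Section Uniqueness.
Variable C : numClosedFieldType.

Lemma mu1_not_mu2 (a : C) : a != 0 -> ~ prod_equiv (mu1 a) (mu2 C).
Proof.
move=> a0 /equiv_invariant.
rewrite skew_norm_mu1 skew_norm_mu2 sym_det_mu1 sym_det_mu2 mul0r => /esym/eqP.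
by rewrite !mulf_eq0 (negbTE a0) !pnatr_eq0.
Qed.

Lemma mu1_not_mu3 (a : C) : a != 0 -> ~ prod_equiv (mu1 a) (mu3 C).
Proof.
move=> a0 /equiv_invariant.
rewrite skew_norm_mu1 skew_norm_mu3 sym_det_mu1 sym_det_mu3 mul0r => /esym/eqP.
by rewrite mulrN oppr_eq0 !mulf_eq0 (negbTE a0) !pnatr_eq0.
Qed.

(* The GL-action preserves symmetry of the matrix; mu_2 is symmetric, mu_3 not. *)
Lemma mu2_not_mu3 : ~ prod_equiv (mu2 C) (mu3 C).
Proof.
move=> [g [_ E]].
have : (mu3 C)^T = mu3 C by rewrite E /prod_act linearZ /= /mu2 mulmx1 trmx_mul trmxK.
move/matrixP => /(_ i1 i2); rewrite !mxE /= => /eqP.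
by rewrite -subr_eq0 opprK -(natrD C 1 1) pnatr_eq0.
Qed.

(* Within the family, the invariant is a^2; the sign of a is absorbed by
   diag(-1, 1, -1). *)
Lemma mu1_equiv_iff (a a' : C) : a != 0 -> a' != 0 ->
  (prod_equiv (mu1 a) (mu1 a') <-> (a = a' \/ a = - a')).
Proof.
move=> a0 a'0; split.
  move=> /equiv_invariant; rewrite !skew_norm_mu1 !sym_det_mu1 => E.
  have /eqP : (a - a') * (a + a') = 0.
    have n32 : (32 : C) != 0 by rewrite pnatr_eq0.
    apply: (mulfI n32); rewrite mulr0.
    have -> : 32 * ((a - a') * (a + a')) = 4 * a ^+ 2 * 8 - 4 * a' ^+ 2 * 8 by ring.
    by rewrite E subrr.
  by rewrite mulf_eq0 subr_eq0 addr_eq0 => /orP[/eqP|/eqP]; [left|right].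
case=> ->.
  exists 1%:M; split; first exact: unitmx1.
  by rewrite /prod_act det1 invr1 scale1r mul1mx trmx1 mulmx1.
exists (mx3 [:: [:: -1; 0; 0]; [:: 0; 1; 0]; [:: 0; 0; -1]]); split.
  by apply: unit_mx3; neq0_by_ring (oner_neq0 C).
rewrite /prod_act /mu1 det_mx3 tr_mx3 !mul_mx3 scale_mx3 opprK.
by apply: mx3_congr; field.
Qed.

End Uniqueness.

(* Discharge the non-vanishing side conditions left by [field]. *)
Ltac nonzero_conds :=
  repeat (apply/andP; split); try done; try assumption; try (by rewrite pnatr_eq0).

Section ProjectiveCongruence.
Variable C : numClosedFieldType.
Implicit Types G M N P : 'M[C]_3.

(* M ~ N when g M g^T = l N for an invertible g and a non-zero scalar l.
   The reduction is phrased with this relation, which composes directly; it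
   implies the GL-equivalence by rescaling g. *)
Definition proj_congr M N : Prop :=
  exists g (l : C), [/\ g \in unitmx, l != 0 & g *m M *m g^T = l *: N].

(* With c = l / det g, the matrix c g acts on M by (det (c g))^-1 c^2 g M g^T = N. *)
Lemma proj_congr_equiv M N : proj_congr M N -> prod_equiv M N.
Proof.
move=> [g [l [gu l0 E]]].
have dg : \det g != 0 by rewrite -unitfE -unitmxE.
set c := l / \det g.
have c0 : c != 0 by rewrite mulf_neq0 // invr_eq0.
exists (c *: g); split; first by rewrite unitmxE detZ unitfE mulf_neq0 // expf_neq0.
rewrite /prod_act detZ linearZ /= -!scalemxAl -scalemxAr E !scalerA.
rewrite -[N in N = _]scale1r; congr (_ *: _).
by rewrite /c; field; nonzero_conds.
Qed.

Lemma proj_congr_trans M N P : proj_congr M N -> proj_congr N P -> proj_congr M P.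
Proof.
move=> [g [l [gu l0 E]]] [h [m [hu m0 F]]].
exists (h *m g), (l * m); split; first by rewrite unitmx_mul gu hu.
  by rewrite mulf_neq0.
rewrite trmx_mul !mulmxA -(mulmxA h) -(mulmxA h) E -scalemxAr -scalemxAl F.
by rewrite scalerA.
Qed.

Lemma proj_congr_basis G M : G \in unitmx -> proj_congr M (G *m M *m G^T).
Proof. by move=> Gu; exists G, 1; rewrite scale1r oner_neq0. Qed.

(* Non-degeneracy is invariant: det g^2 sym_det M = l^3 sym_det N. *)
Lemma proj_congr_sym_det M N : proj_congr M N -> sym_det M != 0 -> sym_det N != 0.
Proof.
move=> [g [l [gu l0 E]]] DM.
have dg : \det g != 0 by rewrite -unitfE -unitmxE.
have := congr1 (@sym_det C) E; rewrite sym_det_congr sym_det_scale => EN.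
apply: contraNneq (mulf_neq0 (expf_neq0 2 dg) DM) => DN0.
by rewrite EN DN0 mulr0.
Qed.

End ProjectiveCongruence.

Section NormalForms.
Variable C : numClosedFieldType.

Lemma mu1_0 : mu1 (0 : C) = mu2 C.
Proof. by rewrite /mu1 /mu2 id_mx3 oppr0. Qed.

Lemma block_to_mu1 (p al f h rho : C) :
  p != 0 -> al != 0 -> rho != 0 ->
  proj_congr (mx3 [:: [:: p; 0; 0]; [:: 0; al^+2 * p; f];
                      [:: 0; h; (rho^+2 + (f+h)^+2) / (4 * (al^+2 * p))]])
             (mu1 ((h - f) / rho)).
Proof.
move=> p0 al0 rho0.
have e0 : al ^+ 2 * p != 0 by rewrite mulf_neq0 // expf_neq0.
have n0 : 2 * al ^+ 3 * p / rho != 0.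
  by rewrite !mulf_neq0 ?invr_eq0 ?expf_neq0 ?pnatr_eq0.
exists (mx3 [:: [:: al; 0; 0]; [:: 0; 1; 0];
                [:: 0; - (f + h) / rho; 2 * (al^+2 * p) / rho]]), (al^+2 * p).
split => //.
  by apply: unit_mx3; neq0_by_ring n0.
rewrite /mu1 tr_mx3 !mul_mx3 scale_mx3.
by apply: mx3_congr; field; nonzero_conds.
Qed.

(* Over the algebraically closed field, square roots bring every block with
   e != 0 and non-degenerate 2x2 symmetric part into the shape above. *)
Lemma block_normal_nondeg (p e f h k : C) :
  p != 0 -> e != 0 -> 4 * e * k - (f + h) ^+ 2 != 0 ->
  exists a, proj_congr (mx3 [:: [:: p; 0; 0]; [:: 0; e; f]; [:: 0; h; k]]) (mu1 a).
Proof.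
move=> p0 e0 D0.
set al := sqrtC (e / p); set rho := sqrtC (4 * e * k - (f + h) ^+ 2).
have al2 : al ^+ 2 = e / p by rewrite sqrtCK.
have rho2 : rho ^+ 2 = 4 * e * k - (f + h) ^+ 2 by rewrite sqrtCK.
have al0 : al != 0 by rewrite sqrtC_eq0 mulf_neq0 ?invr_eq0.
have rho0 : rho != 0 by rewrite sqrtC_eq0.
have Ek : k = (rho^+2 + (f + h)^+2) / (4 * e) by rewrite rho2; field; nonzero_conds.
have Ee : e = al ^+ 2 * p by rewrite al2; field; nonzero_conds.
by exists ((h - f) / rho); rewrite Ek Ee; apply: block_to_mu1.
Qed.

(* The case e = 0 reduces to the previous one: by a transvection if also
   k = 0, and by swapping the last two basis vectors otherwise. *)
Lemma block_normal (p e f h k : C) :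
  p != 0 -> 4 * e * k - (f + h) ^+ 2 != 0 ->
  exists a, proj_congr (mx3 [:: [:: p; 0; 0]; [:: 0; e; f]; [:: 0; h; k]]) (mu1 a).
Proof.
move=> p0 D0.
have [e0|e0] := eqVneq e 0; last exact: block_normal_nondeg.
rewrite e0 in D0 *.
have [k0|k0] := eqVneq k 0.
  pose T : 'M[C]_3 := mx3 [:: [:: 1; 0; 0]; [:: 0; 1; 1]; [:: 0; 0; 1]].
  have Tu : T \in unitmx by apply: unit_mx3; neq0_by_ring (oner_neq0 C).
  have TN : T *m mx3 [:: [:: p; 0; 0]; [:: 0; 0; f]; [:: 0; h; k]] *m T^T =
            mx3 [:: [:: p; 0; 0]; [:: 0; f + h; f]; [:: 0; h; 0]].
    by rewrite /T tr_mx3 !mul_mx3 k0; apply: mx3_congr; ring.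
  have fh0 : f + h != 0 by apply: (contra_neq _ D0) => fh; rewrite fh; ring.
  have [|a Na] := @block_normal_nondeg p (f + h) f h 0 p0 fh0; first by neq0_by_ring D0.
  by exists a; apply: proj_congr_trans (proj_congr_basis _ Tu) _; rewrite TN.
pose S : 'M[C]_3 := mx3 [:: [:: 1; 0; 0]; [:: 0; 0; 1]; [:: 0; 1; 0]].
have m1 : (-1 : C) != 0 by rewrite oppr_eq0 oner_eq0.
have Su : S \in unitmx by apply: unit_mx3; neq0_by_ring m1.
have SN : S *m mx3 [:: [:: p; 0; 0]; [:: 0; 0; f]; [:: 0; h; k]] *m S^T =
          mx3 [:: [:: p; 0; 0]; [:: 0; k; h]; [:: 0; f; 0]].
  by rewrite /S tr_mx3 !mul_mx3; apply: mx3_congr; ring.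
have [|a Na] := @block_normal_nondeg p k h f 0 p0 k0; first by neq0_by_ring D0.
by exists a; apply: proj_congr_trans (proj_congr_basis _ Su) _; rewrite SN.
Qed.

Lemma sym_det_block (p e f h k : C) :
  sym_det (mx3 [:: [:: p; 0; 0]; [:: 0; e; f]; [:: 0; h; k]]) =
  2 * p * (4 * e * k - (f + h) ^+ 2).
Proof. rewrite /sym_det tr_mx3 add_mx3 det_mx3; ring. Qed.

(* A non-degenerate product whose first row and column agree and whose
   (0,0) entry is non-zero: clearing the first row and column reduces it to
   a block-diagonal one. *)
Lemma clear_first_row (p b c e f h k : C) :
  p != 0 -> sym_det (mx3 [:: [:: p; b; c]; [:: b; e; f]; [:: c; h; k]]) != 0 ->
  exists a, proj_congr (mx3 [:: [:: p; b; c]; [:: b; e; f]; [:: c; h; k]]) (mu1 a).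
Proof.
move=> p0 D0.
pose G : 'M[C]_3 := mx3 [:: [:: 1; 0; 0]; [:: - b / p; 1; 0]; [:: - c / p; 0; 1]].
have Gu : G \in unitmx by apply: unit_mx3; neq0_by_ring (oner_neq0 C).
have MN := proj_congr_basis (mx3 [:: [:: p; b; c]; [:: b; e; f]; [:: c; h; k]]) Gu.
have EN : G *m mx3 [:: [:: p; b; c]; [:: b; e; f]; [:: c; h; k]] *m G^T =
   mx3 [:: [:: p; 0; 0]; [:: 0; e - b^+2/p; f - b*c/p]; [:: 0; h - b*c/p; k - c^+2/p]].
  by rewrite /G tr_mx3 !mul_mx3; apply: mx3_congr; field; nonzero_conds.
rewrite EN in MN.
have [|a Na] := @block_normal p (e - b^+2/p) (f - b*c/p) (h - b*c/p) (k - c^+2/p) p0.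
  have := proj_congr_sym_det MN D0.
  by rewrite sym_det_block !mulf_eq0 negb_or => /andP[].
by exists a; apply: proj_congr_trans MN Na.
Qed.

Lemma isotropic_normal (r s al be ga de : C) :
  sym_det (mx3 [:: [:: 0; r; s]; [:: r; al; be]; [:: s; ga; de]]) != 0 -> ga != be ->
  proj_congr (mx3 [:: [:: 0; r; s]; [:: r; al; be]; [:: s; ga; de]]) (mu3 C).
Proof.
move=> D0 gb.
pose q := al * s^+2 - (be + ga) * r * s + de * r^+2.
have q0 : q != 0.
  have ED : sym_det (mx3 [:: [:: 0; r; s]; [:: r; al; be]; [:: s; ga; de]]) = -8 * q.
    by rewrite /sym_det tr_mx3 add_mx3 det_mx3 /q; ring.
  by move: D0; rewrite ED mulf_eq0 negb_or => /andP[].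
have k0 : ga - be != 0 by rewrite subr_eq0.
have mq0 : - q != 0 by rewrite oppr_eq0.
pose y2 := (be + ga) * s - 2 * de * r.
pose y3 := (be + ga) * r - 2 * al * s.
pose x := (al * y2^+2 + (be + ga) * y2 * y3 + de * y3^+2) / (4 * q).
exists (mx3 [:: [:: - (ga - be) / 2; 0; 0];
                [:: x / (ga - be); y2 / (ga - be); y3 / (ga - be)];
                [:: 0; s; - r]]), q.
split => //.
  apply: unit_mx3; apply: (contra_neq _ mq0) => D; apply: (etrans _ D).
  by rewrite /y2 /y3 /q; field; nonzero_conds.
rewrite /mu3 tr_mx3 !mul_mx3 scale_mx3 /x /y2 /y3.
by apply: mx3_congr; rewrite /q; field; nonzero_conds.
Qed.

End NormalForms.

Section Reduction.
Variable C : numClosedFieldType.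
Implicit Types M : 'M[C]_3.
Implicit Type u : C * C * C.

Lemma basis_with_first_row u : u != (0, 0, 0) ->
  exists2 G : 'M[C]_3, G \in unitmx & row3 G i0 = u.
Proof.
case: u => [[u0 u1] u2] u_nz.
have [u00|u00] := eqVneq u0 0; last first.
  exists (mx3 [:: [:: u0; u1; u2]; [:: 0; 1; 0]; [:: 0; 0; 1]]); last by rewrite /row3 !mxE.
  by apply: unit_mx3; neq0_by_ring u00.
have [u10|u10] := eqVneq u1 0; last first.
  have mu10 : - u1 != 0 by rewrite oppr_eq0.
  exists (mx3 [:: [:: u0; u1; u2]; [:: 1; 0; 0]; [:: 0; 0; 1]]); last by rewrite /row3 !mxE.
  by apply: unit_mx3; neq0_by_ring mu10.
have u20 : u2 != 0 by apply: contraNneq u_nz => u20; rewrite u00 u10 u20.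
exists (mx3 [:: [:: u0; u1; u2]; [:: 1; 0; 0]; [:: 0; 1; 0]]); last by rewrite /row3 !mxE.
by apply: unit_mx3; neq0_by_ring u20.
Qed.

Lemma qf_nonzero_vector M u : qf M u != 0 -> u != (0, 0, 0).
Proof. by apply: contraNneq => ->; rewrite /qf /bil; apply/eqP; ring. Qed.

(* A symmetric non-degenerate form has a non-isotropic vector: otherwise it
   vanishes on e_i and e_i + e_j, hence all its entries vanish. *)
Lemma symmetric_nonisotropic M : skew_vec M = (0, 0, 0) -> sym_det M != 0 ->
  exists u, qf M u != 0.
Proof.
case=> /subr0_eq s21 /subr0_eq s02 /subr0_eq s10 D.
have [q0|] := eqVneq (qf M (1, 0, 0)) 0; last by exists (1, 0, 0).
have [q1|] := eqVneq (qf M (0, 1, 0)) 0; last by exists (0, 1, 0).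
have [q2|] := eqVneq (qf M (0, 0, 1)) 0; last by exists (0, 0, 1).
have [q01|] := eqVneq (qf M (1, 1, 0)) 0; last by exists (1, 1, 0).
have [q02|] := eqVneq (qf M (1, 0, 1)) 0; last by exists (1, 0, 1).
have [q12|] := eqVneq (qf M (0, 1, 1)) 0; last by exists (0, 1, 1).
have m00 : M i0 i0 = 0 by rewrite -q0 /qf /bil; ring.
have m11 : M i1 i1 = 0 by rewrite -q1 /qf /bil; ring.
have m22 : M i2 i2 = 0 by rewrite -q2 /qf /bil; ring.
have n2 : (2 : C) != 0 by rewrite pnatr_eq0.
have m01 : M i0 i1 = 0.
  by apply: (mulfI n2); rewrite mulr0 -q01 /qf /bil s10 m00 m11; ring.
have m02 : M i2 i0 = 0.
  by apply: (mulfI n2); rewrite mulr0 -q02 /qf /bil s02 m00 m22; ring.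
have m12 : M i1 i2 = 0.
  by apply: (mulfI n2); rewrite mulr0 -q12 /qf /bil s21 m11 m22; ring.
move/eqP: D => D; exfalso; apply: D.
rewrite /sym_det (mx3_eta M) tr_mx3 add_mx3 det_mx3.
by rewrite s10 s02 s21 m00 m11 m22 m01 m02 m12; ring.
Qed.

(* Taking as first basis vector a non-isotropic u on which the form is
   symmetric yields a matrix whose first row and column agree
   and whose (0,0) entry is non-zero; then [clear_first_row] applies. *)
Lemma reduce_nonisotropic M u :
  qf M u != 0 -> (forall v, bil M u v = bil M v u) -> sym_det M != 0 ->
  exists a, proj_congr M (mu1 a).
Proof.
move=> qu u_sym DM.
have [G Gu G0] := basis_with_first_row (qf_nonzero_vector qu).
have MN := proj_congr_basis M Gu; have DN := proj_congr_sym_det MN DM.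
have entry := congr_entry G M; move: (G *m M *m G^T) entry MN DN => N entry MN DN.
have N00 : N i0 i0 != 0 by rewrite entry G0.
have N10 : N i1 i0 = N i0 i1 by rewrite !entry G0 u_sym.
have N20 : N i2 i0 = N i0 i2 by rewrite !entry G0 u_sym.
have [a Na] : exists a, proj_congr N (mu1 a).
  by rewrite (mx3_eta N) N10 N20 in DN *; apply: clear_first_row.
by exists a; apply: proj_congr_trans MN Na.
Qed.

(* When the skew vector w is non-zero but isotropic, take it as first basis
   vector; the lower block is then asymmetric because the asymmetry of the
   form on the other two basis vectors is the triple product with w, i.e.
   the determinant of the change of basis. *)
Lemma reduce_isotropic M : skew_vec M != (0, 0, 0) -> skew_norm M = 0 ->
  sym_det M != 0 -> proj_congr M (mu3 C).
Proof.
move=> w_nz w_iso DM.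
have [G Gu G0] := basis_with_first_row w_nz.
have dG : \det G != 0 by rewrite -unitfE -unitmxE.
have MN := proj_congr_basis M Gu; have DN := proj_congr_sym_det MN DM.
have entry := congr_entry G M; move: (G *m M *m G^T) entry MN DN => N entry MN DN.
have N00 : N i0 i0 = 0 by rewrite entry G0.
have N10 : N i1 i0 = N i0 i1 by rewrite !entry G0 skew_vec_bil_sym.
have N20 : N i2 i0 = N i0 i2 by rewrite !entry G0 skew_vec_bil_sym.
have N21 : N i2 i1 != N i1 i2.
  by rewrite -subr_eq0 !entry bil_skew -G0 det_rows.
have NC : proj_congr N (mu3 C).
  by rewrite (mx3_eta N) N10 N20 N00 in DN *; apply: isotropic_normal.
exact: proj_congr_trans MN NC.
Qed.

Lemma reduction M : sym_det M != 0 ->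
  (exists a, proj_congr M (mu1 a)) \/ proj_congr M (mu3 C).
Proof.
move=> DM.
have [w0|w_nz] := eqVneq (skew_vec M) (0, 0, 0).
  have [u qu] := symmetric_nonisotropic w0 DM.
  by left; apply: (reduce_nonisotropic qu) => // v; apply: skew_free_bil_sym.
have [w_iso|w_aniso] := eqVneq (skew_norm M) 0; first by right; apply: reduce_isotropic.
by left; apply: (reduce_nonisotropic w_aniso (skew_vec_bil_sym M)).
Qed.

End Reduction.

Lemma nondeg_sym_det (C : numClosedFieldType) (M : 'M[C]_3) :
  prod_nondeg M -> sym_det M != 0.
Proof. by rewrite /prod_nondeg unitmxE detZ unitfE mulf_eq0 negb_or => /andP[]. Qed.

Theorem proposition2p2 (C : numClosedFieldType) :
  (* existence: every non-degenerate product is equivalent to a normal form *)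
  (forall M : 'M[C]_3, prod_nondeg M ->
     (exists2 a : C, a != 0 & prod_equiv M (mu1 a))
     \/ prod_equiv M (mu2 C) \/ prod_equiv M (mu3 C)) /\
  (* uniqueness: the three families are pairwise inequivalent *)
  (forall a : C, a != 0 -> ~ prod_equiv (mu1 a) (mu2 C)) /\
  (forall a : C, a != 0 -> ~ prod_equiv (mu1 a) (mu3 C)) /\
  ~ prod_equiv (mu2 C) (mu3 C) /\
  (* within the family mu_{1;a} *)
  (forall a a' : C, a != 0 -> a' != 0 ->
     (prod_equiv (mu1 a) (mu1 a') <-> (a = a' \/ a = - a'))).
Proof.
split.
  move=> M /nondeg_sym_det /reduction [[a /proj_congr_equiv Ma]|/proj_congr_equiv M3].
  - have [a0|a_nz] := eqVneq a 0; last by left; exists a.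
    by right; left; rewrite -mu1_0 -a0.
  - by right; right.
split; first exact: mu1_not_mu2.
split; first exact: mu1_not_mu3.
split; first exact: mu2_not_mu3.
exact: mu1_equiv_iff.
Qed.
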